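(* Let $\alpha>1$ and let $m_0\in\mathrm{BUC}([0,\infty))$ be non-decreasing with $m_0(0)=0$, $M=\sup m_0>0$, and suppose there is $c_0\in(0,\infty)$ with $m_0(\rho)<M$ for $\rho<c_0$ and $m_0(\rho)=M$ for $\rho\ge c_0$ (i.e. $c_0=\max\operatorname{supp}u_0$ for $u_0=(m_0)_\rho$). If $$\limsup_{\rho\to c_0^-}\frac{M-m_0(\rho)}{(c_0-\rho)^{\frac\alpha{\alpha-1}}}<+\infty,$$ then there is a waiting time: there exists $T>0$ such that the viscosity solution $m$ of the mass problem with datum $m_0$ satisfies $m(t,\rho)=M$ for all $\rho\ge c_0$ and all $t\in[0,T)$ (so the support of $u(t,\cdot)=m_\rho(t,\cdot)$ stays in $[0,c_0]$).
   Context: $\mathrm{BUC}$ denotes bounded uniformly continuous functions. The mass problem is $m_t+(m_\rho)_+^\alpha m=0$ ($t,\rho>0$), $m(t,0)=0$, $m(0,\cdot)=m_0$, understood in the viscosity sense: with Fréchet super/subdifferentials $D^\pm$, a continuous $m$ is a subsolution if $p_1+(p_2)_+^\alpha m\le0$ for $(p_1,p_2)\in D^+m(t,\rho)$, $m(0,\cdot)\le m_0$, $m(t,0)\le0$; a supersolution with reversed inequalities and $D^-$; a solution if both. Known facts used as standing background: for $m_0\in\mathrm{BUC}$ non-decreasing with $m_0(0)=0$ there is a unique $\mathrm{BUC}$ viscosity solution, and uniformly continuous sub- and supersolutions are ordered (comparison principle). *)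

From Stdlib Require Import Reals.
Open Scope R_scope.

(* Positive part raised to the power a (a > 1, so 0^a = 0). *)
Definition pospow (p a : R) : R := if Rle_dec p 0 then 0 else Rpower p a.

Definition BUC1 (f : R -> R) : Prop :=
  (exists B, forall x, 0 <= x -> Rabs (f x) <= B) /\
  (forall eps, 0 < eps -> exists del, 0 < del /\
     forall x y, 0 <= x -> 0 <= y -> Rabs (x - y) < del -> Rabs (f x - f y) < eps).

Definition BUC2 (m : R -> R -> R) : Prop :=
  (exists B, forall t r, 0 <= t -> 0 <= r -> Rabs (m t r) <= B) /\
  (forall eps, 0 < eps -> exists del, 0 < del /\
     forall t r s q, 0 <= t -> 0 <= r -> 0 <= s -> 0 <= q ->
       Rabs (t - s) < del -> Rabs (r - q) < del -> Rabs (m t r - m s q) < eps).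

Definition cont_quadrant (m : R -> R -> R) : Prop :=
  forall t r, 0 <= t -> 0 <= r -> forall eps, 0 < eps -> exists del, 0 < del /\
    forall s q, 0 <= s -> 0 <= q -> Rabs (s - t) < del -> Rabs (q - r) < del ->
      Rabs (m s q - m t r) < eps.

(* Frechet superdifferential D^+ m(t,r):
   limsup_{(s,q)->(t,r)} [m(s,q)-m(t,r)-p1(s-t)-p2(q-r)] / |(s-t,q-r)| <= 0. *)
Definition superdiff (m : R -> R -> R) (t r p1 p2 : R) : Prop :=
  forall eps, 0 < eps -> exists del, 0 < del /\
    forall s q, Rabs (s - t) < del -> Rabs (q - r) < del ->
      m s q - m t r - p1 * (s - t) - p2 * (q - r) <= eps * (Rabs (s - t) + Rabs (q - r)).

Definition subdiff (m : R -> R -> R) (t r p1 p2 : R) : Prop :=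
  forall eps, 0 < eps -> exists del, 0 < del /\
    forall s q, Rabs (s - t) < del -> Rabs (q - r) < del ->
      m s q - m t r - p1 * (s - t) - p2 * (q - r) >= - eps * (Rabs (s - t) + Rabs (q - r)).

Definition visc_sub (a : R) (m0 : R -> R) (m : R -> R -> R) : Prop :=
  cont_quadrant m /\
  (forall t r p1 p2, 0 < t -> 0 < r -> superdiff m t r p1 p2 ->
     p1 + pospow p2 a * m t r <= 0) /\
  (forall r, 0 <= r -> m 0 r <= m0 r) /\
  (forall t, 0 <= t -> m t 0 <= 0).

Definition visc_super (a : R) (m0 : R -> R) (m : R -> R -> R) : Prop :=
  cont_quadrant m /\
  (forall t r p1 p2, 0 < t -> 0 < r -> subdiff m t r p1 p2 ->
     p1 + pospow p2 a * m t r >= 0) /\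
  (forall r, 0 <= r -> m 0 r >= m0 r) /\
  (forall t, 0 <= t -> m t 0 >= 0).

Definition visc_sol (a : R) (m0 : R -> R) (m : R -> R -> R) : Prop :=
  visc_sub a m0 m /\ visc_super a m0 m.

(* Let b = a/(a-1), so that b > 1 and (b - 1) a = b, and let h(r) = ((c0 - r)_+)^b.  The
   growth hypothesis at c0 yields A > 0 with M - A h <= m0 on [0,oo) and M <= A c0^b.  With
   c = (2 A b)^a M / A the barrier w(t,r) = M - A h(r) (1 + c t) satisfies, on
   [0, 1/(2c)) x (0,oo), the differential inequality w_t + (w_r)_+^a M <= 0, b being exactly
   the exponent for which (w_r)^a is a multiple of h.  Two comparison arguments then show
   w <= m <= M  for every BUC viscosity solution m, and w = M for r >= c0: the waiting time
   is T = 1/(2c).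

   Both comparisons are proved directly from the Frechet sub/superdifferentials: a
   difference G, lowered by a penalty eps t + lam ((t - T0)_+)^2 + del r^2, attains its
   maximum over the quadrant (penalized_max); the initial and boundary conditions keep the
   maximum off {t = 0} and {r = 0}, and at an interior maximum the test function touches m,
   so its gradient enters the viscosity inequality and yields a contradiction. *)

From Stdlib Require Import Reals Lra Psatz ClassicalEpsilon.
Open Scope R_scope.

Lemma Rabs_le_inv x e : Rabs x <= e -> -e <= x <= e.
Proof. intros H. unfold Rabs in H. destruct (Rcase_abs x); lra. Qed.

Lemma lt_Rmin_l x a b : x < Rmin a b -> x < a.
Proof. intros H. eapply Rlt_le_trans; [exact H | apply Rmin_l]. Qed.

Lemma lt_Rmin_r x a b : x < Rmin a b -> x < b.
Proof. intros H. eapply Rlt_le_trans; [exact H | apply Rmin_r]. Qed.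

Lemma Rpower_pos x y : 0 < Rpower x y.
Proof. unfold Rpower. apply exp_pos. Qed.

Lemma Rdiv_mul_cancel eps k : 0 < k -> eps / k * k = eps.
Proof. intros Hk. field. lra. Qed.

Lemma pospow_nonneg p a : 0 <= pospow p a.
Proof. unfold pospow. destruct Rle_dec; [lra | left; apply Rpower_pos]. Qed.

Lemma pospow_mono p q a : 0 <= a -> p <= q -> pospow p a <= pospow q a.
Proof.
  intros Ha Hpq. unfold pospow.
  destruct (Rle_dec p 0); destruct (Rle_dec q 0).
  - lra.
  - left; apply Rpower_pos.
  - lra.
  - apply Rle_Rpower_l; lra.
Qed.

Definition fderiv1 (f : R -> R) (x d : R) : Prop :=
  forall eps, 0 < eps -> exists del, 0 < del /\
    forall y, Rabs (y - x) < del -> Rabs (f y - f x - d * (y - x)) <= eps * Rabs (y - x).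

Lemma fderiv1_of_derivable f x d : derivable_pt_lim f x d -> fderiv1 f x d.
Proof.
  intros H eps He. destruct (H eps He) as [del Hd].
  exists del; split; [apply cond_pos |]. intros y Hy.
  destruct (Req_dec y x) as [-> | Hne].
  - replace (f x - f x - d * (x - x)) with 0 by ring. rewrite Rminus_diag, Rabs_R0. lra.
  - assert (Hyx : y - x <> 0) by lra.
    specialize (Hd (y - x) Hyx Hy). replace (x + (y - x)) with y in Hd by ring.
    replace (f y - f x - d * (y - x)) with (((f y - f x) / (y - x) - d) * (y - x))
      by (field; auto).
    rewrite Rabs_mult. apply Rmult_le_compat_r; [apply Rabs_pos | lra].
Qed.

Lemma fderiv1_quad f x d K : 0 <= K ->
  (forall y, Rabs (f y - f x - d * (y - x)) <= K * (y - x) ^ 2) -> fderiv1 f x d.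
Proof.
  intros HK H eps He. exists (eps / (K + 1)). split; [apply Rdiv_lt_0_compat; lra |].
  intros y Hy. eapply Rle_trans; [apply H |].
  rewrite <- (pow2_abs (y - x)).
  pose proof (Rabs_pos (y - x)).
  assert (Rabs (y - x) * (K + 1) < eps).
  { rewrite <- (Rdiv_mul_cancel eps (K + 1)) by lra. apply Rmult_lt_compat_r; lra. }
  nra.
Qed.

Lemma fderiv1_const k x : fderiv1 (fun _ => k) x 0.
Proof.
  apply (fderiv1_quad _ _ _ 0); [lra |]. intros y.
  replace (k - k - 0 * (y - x)) with 0 by ring. rewrite Rabs_R0.
  pose proof (pow2_ge_0 (y - x)). lra.
Qed.

Lemma fderiv1_sq x : fderiv1 (fun y => y * y) x (2 * x).
Proof.
  apply (fderiv1_quad _ _ _ 1); [lra |]. intros y.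
  replace (y * y - x * x - 2 * x * (y - x)) with ((y - x) ^ 2) by ring.
  rewrite Rabs_right; [lra | apply Rle_ge, pow2_ge_0].
Qed.

Lemma fderiv1_plus f g x d e : fderiv1 f x d -> fderiv1 g x e ->
  fderiv1 (fun y => f y + g y) x (d + e).
Proof.
  intros Hf Hg eps He.
  destruct (Hf (eps / 2)) as [d1 [Hd1 H1]]; [lra |].
  destruct (Hg (eps / 2)) as [d2 [Hd2 H2]]; [lra |].
  exists (Rmin d1 d2). split; [apply Rmin_pos; lra |]. intros y Hy.
  specialize (H1 y (lt_Rmin_l _ _ _ Hy)). specialize (H2 y (lt_Rmin_r _ _ _ Hy)).
  replace (f y + g y - (f x + g x) - (d + e) * (y - x))
    with ((f y - f x - d * (y - x)) + (g y - g x - e * (y - x))) by ring.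
  eapply Rle_trans; [apply Rabs_triang | lra].
Qed.

Lemma fderiv1_scal k f x d : fderiv1 f x d -> fderiv1 (fun y => k * f y) x (k * d).
Proof.
  intros Hf eps He.
  assert (Hk : 0 < Rabs k + 1) by (pose proof (Rabs_pos k); lra).
  destruct (Hf (eps / (Rabs k + 1))) as [del [Hdel H]]; [apply Rdiv_lt_0_compat; lra |].
  exists del. split; [exact Hdel |]. intros y Hy. specialize (H y Hy).
  replace (k * f y - k * f x - k * d * (y - x)) with (k * (f y - f x - d * (y - x))) by ring.
  rewrite Rabs_mult.
  pose proof (Rdiv_mul_cancel eps (Rabs k + 1) Hk).
  pose proof (Rabs_pos k). pose proof (Rabs_pos (y - x)).
  pose proof (Rabs_pos (f y - f x - d * (y - x))). nra.
Qed.

Lemma fderiv1_ext f g x d e :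
  (forall y, f y = g y) -> d = e -> fderiv1 f x d -> fderiv1 g x e.
Proof.
  intros E E' H eps He. destruct (H eps He) as [del [Hd H1]]. exists del; split; [exact Hd |].
  intros y Hy. rewrite <- !E, <- E'. auto.
Qed.

Lemma fderiv1_local f g x d r0 : 0 < r0 ->
  (forall y, Rabs (y - x) < r0 -> f y = g y) -> fderiv1 g x d -> fderiv1 f x d.
Proof.
  intros Hr E H eps He. destruct (H eps He) as [del [Hd H1]].
  exists (Rmin del r0). split; [apply Rmin_pos; lra |]. intros y Hy.
  rewrite (E y (lt_Rmin_r _ _ _ Hy)), (E x) by (rewrite Rminus_diag, Rabs_R0; lra).
  exact (H1 y (lt_Rmin_l _ _ _ Hy)).
Qed.

Lemma fderiv1_continuous u x d : fderiv1 u x d -> continuity_pt u x.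
Proof.
  intros H. unfold continuity_pt, continue_in, limit1_in, limit_in. simpl. unfold R_dist.
  intros eps He. destruct (H 1 Rlt_0_1) as [d1 [Hd1 H1]].
  assert (Hk : 0 < Rabs d + 2) by (pose proof (Rabs_pos d); lra).
  exists (Rmin d1 (eps / (Rabs d + 2))).
  split; [apply Rmin_pos; [lra | apply Rdiv_lt_0_compat; lra] |].
  intros y [_ Hy].
  specialize (H1 y (lt_Rmin_l _ _ _ Hy)). pose proof (lt_Rmin_r _ _ _ Hy) as Hy2.
  replace (u y - u x) with ((u y - u x - d * (y - x)) + d * (y - x)) by ring.
  eapply Rle_lt_trans; [apply Rabs_triang |]. rewrite Rabs_mult.
  pose proof (Rdiv_mul_cancel eps (Rabs d + 2) Hk).
  pose proof (Rabs_pos d). pose proof (Rabs_pos (y - x)). nra.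
Qed.

Definition fderiv2 (f : R -> R -> R) (t r p1 p2 : R) : Prop :=
  forall eps, 0 < eps -> exists del, 0 < del /\
    forall s q, Rabs (s - t) < del -> Rabs (q - r) < del ->
      Rabs (f s q - f t r - p1 * (s - t) - p2 * (q - r))
        <= eps * (Rabs (s - t) + Rabs (q - r)).

Lemma fderiv2_plus f g t r p1 p2 q1 q2 : fderiv2 f t r p1 p2 -> fderiv2 g t r q1 q2 ->
  fderiv2 (fun s q => f s q + g s q) t r (p1 + q1) (p2 + q2).
Proof.
  intros Hf Hg eps He.
  destruct (Hf (eps / 2)) as [d1 [Hd1 H1]]; [lra |].
  destruct (Hg (eps / 2)) as [d2 [Hd2 H2]]; [lra |].
  exists (Rmin d1 d2). split; [apply Rmin_pos; lra |].
  intros s q Hs Hq.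
  specialize (H1 s q (lt_Rmin_l _ _ _ Hs) (lt_Rmin_l _ _ _ Hq)).
  specialize (H2 s q (lt_Rmin_r _ _ _ Hs) (lt_Rmin_r _ _ _ Hq)).
  replace (f s q + g s q - (f t r + g t r) - (p1 + q1) * (s - t) - (p2 + q2) * (q - r))
    with ((f s q - f t r - p1 * (s - t) - p2 * (q - r))
          + (g s q - g t r - q1 * (s - t) - q2 * (q - r))) by ring.
  eapply Rle_trans; [apply Rabs_triang | lra].
Qed.

Lemma fderiv2_opp f t r p1 p2 : fderiv2 f t r p1 p2 ->
  fderiv2 (fun s q => - f s q) t r (- p1) (- p2).
Proof.
  intros Hf eps He. destruct (Hf eps He) as [del [Hd H]]. exists del; split; [exact Hd |].
  intros s q Hs Hq.
  replace (- f s q - - f t r - - p1 * (s - t) - - p2 * (q - r))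
    with (- (f s q - f t r - p1 * (s - t) - p2 * (q - r))) by ring.
  rewrite Rabs_Ropp. auto.
Qed.

Lemma fderiv2_ext f g t r p1 p2 q1 q2 :
  (forall s q, f s q = g s q) -> p1 = q1 -> p2 = q2 ->
  fderiv2 f t r p1 p2 -> fderiv2 g t r q1 q2.
Proof.
  intros E E1 E2 H eps He. destruct (H eps He) as [del [Hd H1]]. exists del; split; [exact Hd |].
  intros s q Hs Hq. rewrite <- !E, <- E1, <- E2. auto.
Qed.

Lemma fderiv2_time u t r d : fderiv1 u t d -> fderiv2 (fun s _ => u s) t r d 0.
Proof.
  intros H eps He. destruct (H eps He) as [del [Hd H1]]. exists del; split; [exact Hd |].
  intros s q Hs _. specialize (H1 s Hs).
  replace (u s - u t - d * (s - t) - 0 * (q - r)) with (u s - u t - d * (s - t)) by ring.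
  pose proof (Rabs_pos (q - r)); nra.
Qed.

Lemma fderiv2_space u t r d : fderiv1 u r d -> fderiv2 (fun _ q => u q) t r 0 d.
Proof.
  intros H eps He. destruct (H eps He) as [del [Hd H1]]. exists del; split; [exact Hd |].
  intros s q _ Hq. specialize (H1 q Hq).
  replace (u q - u r - 0 * (s - t) - d * (q - r)) with (u q - u r - d * (q - r)) by ring.
  pose proof (Rabs_pos (s - t)); nra.
Qed.

Lemma fderiv2_time_mul u t r d : fderiv1 u r d ->
  fderiv2 (fun s q => s * u q) t r (u r) (t * d).
Proof.
  intros H eps He.
  assert (Ht : 0 < Rabs t + 1) by (pose proof (Rabs_pos t); lra).
  assert (Hd : 0 < Rabs d + 1) by (pose proof (Rabs_pos d); lra).
  set (eta := Rmin 1 (eps / (2 * (Rabs t + 1)))).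
  assert (Heta : 0 < eta) by (apply Rmin_pos; [lra | apply Rdiv_lt_0_compat; lra]).
  destruct (H eta Heta) as [d1 [Hd1 H1]].
  exists (Rmin d1 (eps / (2 * (Rabs d + 1)))).
  split; [apply Rmin_pos; [lra | apply Rdiv_lt_0_compat; lra] |]. intros s q Hs Hq.
  specialize (H1 q (lt_Rmin_l _ _ _ Hq)). pose proof (lt_Rmin_r _ _ _ Hq) as Hq2.
  set (X := u q - u r - d * (q - r)) in *.
  replace (s * u q - t * u r - u r * (s - t) - t * d * (q - r))
    with (t * X + (s - t) * X + (s - t) * (d * (q - r))) by (unfold X; ring).
  assert (He1 : eta <= 1) by apply Rmin_l.
  assert (He2 : eta <= eps / (2 * (Rabs t + 1))) by apply Rmin_r.
  assert (E1 : eps / (2 * (Rabs t + 1)) * (Rabs t + 1) = eps / 2) by (field; lra).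
  assert (E2 : eps / (2 * (Rabs d + 1)) * (Rabs d + 1) = eps / 2) by (field; lra).
  pose proof (Rabs_pos t). pose proof (Rabs_pos d). pose proof (Rabs_pos (s - t)).
  pose proof (Rabs_pos (q - r)). pose proof (Rabs_pos X).
  eapply Rle_trans; [apply Rabs_triang |].
  eapply Rle_trans; [apply Rplus_le_compat_r; apply Rabs_triang |].
  rewrite !Rabs_mult.
  assert (A1 : Rabs t * Rabs X <= eps / 2 * Rabs (q - r)).
  { assert (Rabs X <= eps / (2 * (Rabs t + 1)) * Rabs (q - r)) by nra. nra. }
  assert (A2 : Rabs (s - t) * Rabs X + Rabs (s - t) * (Rabs d * Rabs (q - r))
               <= eps / 2 * Rabs (s - t)).
  { assert (Rabs X <= Rabs (q - r)) by nra.
    assert (Rabs (q - r) * (Rabs d + 1) <= eps / 2) by nra. nra. }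
  nra.
Qed.

Lemma touch_below_subdiff m phi t1 r1 p1 p2 : 0 < t1 -> 0 < r1 -> fderiv2 phi t1 r1 p1 p2 ->
  (forall s q, 0 <= s -> 0 <= q -> m t1 r1 - phi t1 r1 <= m s q - phi s q) ->
  subdiff m t1 r1 p1 p2.
Proof.
  intros Ht Hr HF Hmin eps He. destruct (HF eps He) as [d [Hd H]].
  exists (Rmin d (Rmin t1 r1)). split; [repeat apply Rmin_pos; lra |].
  intros s q Hs Hq.
  specialize (H s q (lt_Rmin_l _ _ _ Hs) (lt_Rmin_l _ _ _ Hq)).
  apply Rabs_def2 in Hs as [_ Hs]. apply Rabs_def2 in Hq as [_ Hq].
  assert (Hs0 : 0 <= s) by (pose proof (Rmin_l t1 r1); pose proof (Rmin_r d (Rmin t1 r1)); lra).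
  assert (Hq0 : 0 <= q) by (pose proof (Rmin_r t1 r1); pose proof (Rmin_r d (Rmin t1 r1)); lra).
  specialize (Hmin s q Hs0 Hq0). apply Rabs_le_inv in H. lra.
Qed.

Lemma touch_above_superdiff m phi t1 r1 p1 p2 : 0 < t1 -> 0 < r1 -> fderiv2 phi t1 r1 p1 p2 ->
  (forall s q, 0 <= s -> 0 <= q -> m s q - phi s q <= m t1 r1 - phi t1 r1) ->
  superdiff m t1 r1 p1 p2.
Proof.
  intros Ht Hr HF Hmax eps He. destruct (HF eps He) as [d [Hd H]].
  exists (Rmin d (Rmin t1 r1)). split; [repeat apply Rmin_pos; lra |].
  intros s q Hs Hq.
  specialize (H s q (lt_Rmin_l _ _ _ Hs) (lt_Rmin_l _ _ _ Hq)).
  apply Rabs_def2 in Hs as [_ Hs]. apply Rabs_def2 in Hq as [_ Hq].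
  assert (Hs0 : 0 <= s) by (pose proof (Rmin_l t1 r1); pose proof (Rmin_r d (Rmin t1 r1)); lra).
  assert (Hq0 : 0 <= q) by (pose proof (Rmin_r t1 r1); pose proof (Rmin_r d (Rmin t1 r1)); lra).
  specialize (Hmax s q Hs0 Hq0). apply Rabs_le_inv in H. lra.
Qed.

(* The penalized functions below are continuous in space for each fixed
   time, and continuous in time uniformly in space, on every square [0,R0]^2; these two
   properties suffice to maximize them over a square by two one-dimensional arguments. *)
Definition cont_in_space (F : R -> R -> R) (R0 : R) : Prop :=
  forall t r, 0 <= t <= R0 -> 0 <= r <= R0 -> forall eps, 0 < eps -> exists del, 0 < del /\
    forall r', 0 <= r' <= R0 -> Rabs (r' - r) < del -> Rabs (F t r' - F t r) < eps.

Definition equicont_in_time (F : R -> R -> R) (R0 : R) : Prop :=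
  forall eps, 0 < eps -> exists del, 0 < del /\
    forall t t' r, 0 <= t <= R0 -> 0 <= t' <= R0 -> 0 <= r <= R0 ->
      Rabs (t - t') < del -> Rabs (F t r - F t' r) < eps.

(* Projection of the real line onto [0,R0], used to extend functions on the interval
   continuously to the whole line. *)
Definition clamp (R0 x : R) : R := Rmax 0 (Rmin R0 x).

Lemma clamp_in R0 x : 0 <= R0 -> 0 <= clamp R0 x <= R0.
Proof. intros. unfold clamp, Rmax, Rmin. repeat destruct Rle_dec; lra. Qed.

Lemma clamp_id R0 x : 0 <= x <= R0 -> clamp R0 x = x.
Proof. intros. unfold clamp, Rmax, Rmin. repeat destruct Rle_dec; lra. Qed.

Lemma clamp_lip R0 x y : 0 <= R0 -> Rabs (clamp R0 x - clamp R0 y) <= Rabs (x - y).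
Proof.
  intros. unfold clamp, Rmax, Rmin, Rabs.
  repeat destruct Rle_dec; repeat destruct Rcase_abs; lra.
Qed.

(* Maximum over a square: maximize in space for each time, then maximize the resulting
   (continuous, by equicontinuity) function of time. *)
Lemma square_max F R0 : 0 <= R0 -> cont_in_space F R0 -> equicont_in_time F R0 ->
  exists t1 r1, 0 <= t1 <= R0 /\ 0 <= r1 <= R0 /\
    forall t r, 0 <= t <= R0 -> 0 <= r <= R0 -> F t r <= F t1 r1.
Proof.
  intros HR Hr Ht.
  assert (Hslice : forall t, exists r1, 0 <= r1 <= R0 /\
            forall r, 0 <= r <= R0 -> F (clamp R0 t) r <= F (clamp R0 t) r1).
  { intros t. pose proof (clamp_in R0 t HR) as Hct.
    destruct (continuity_ab_maj (fun r => F (clamp R0 t) (clamp R0 r)) 0 R0 HR)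
      as [Mx [HM HMx]].
    - intros c Hc. unfold continuity_pt, continue_in, limit1_in, limit_in. simpl.
      unfold R_dist. intros eps He. destruct (Hr (clamp R0 t) c Hct Hc eps He) as [d [Hd H]].
      exists d. split; [lra |]. intros x [_ Hx].
      assert (Hcl : Rabs (clamp R0 x - clamp R0 c) < d)
        by (eapply Rle_lt_trans; [apply clamp_lip; auto | exact Hx]).
      rewrite (clamp_id R0 c Hc) in *. apply H; [apply clamp_in; auto | exact Hcl].
    - exists Mx. split; [exact HMx |]. intros r Hr'. specialize (HM r Hr'). simpl in HM.
      rewrite (clamp_id R0 r Hr'), (clamp_id R0 Mx HMx) in HM. exact HM. }
  assert (Hsel : forall t, {r1 | 0 <= r1 <= R0 /\
            forall r, 0 <= r <= R0 -> F (clamp R0 t) r <= F (clamp R0 t) r1})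
    by (intros t; apply constructive_indefinite_description, Hslice).
  set (G := fun t => F (clamp R0 t) (proj1_sig (Hsel t))).
  destruct (continuity_ab_maj G 0 R0 HR) as [Mx [HM HMx]].
  - intros c Hc. unfold continuity_pt, continue_in, limit1_in, limit_in. simpl.
    unfold R_dist. intros eps He. destruct (Ht (eps / 2)) as [d [Hd H]]; [lra |].
    exists d. split; [lra |]. intros x [_ Hx]. unfold G.
    destruct (Hsel x) as [rx [Hrx Hx']]. destruct (Hsel c) as [rc [Hrc Hc']]. simpl.
    assert (Hcl : Rabs (clamp R0 x - clamp R0 c) < d)
      by (eapply Rle_lt_trans; [apply clamp_lip; auto | exact Hx]).
    pose proof (H _ _ rx (clamp_in R0 x HR) (clamp_in R0 c HR) Hrx Hcl) as H1.
    pose proof (H _ _ rc (clamp_in R0 x HR) (clamp_in R0 c HR) Hrc Hcl) as H2.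
    specialize (Hx' rc Hrc). specialize (Hc' rx Hrx).
    apply Rabs_def1; apply Rabs_def2 in H1; apply Rabs_def2 in H2; lra.
  - exists Mx, (proj1_sig (Hsel Mx)). split; [exact HMx |].
    split; [apply (proj2_sig (Hsel Mx)) |].
    intros t r Htt Hrr. specialize (HM t Htt). unfold G in HM.
    destruct (proj2_sig (Hsel t)) as [_ Hs]. specialize (Hs r Hrr).
    destruct (Hsel t) as [rt Hrt]; destruct (Hsel Mx) as [rM HrM]; simpl in *.
    rewrite (clamp_id R0 t Htt), (clamp_id R0 Mx HMx) in HM.
    rewrite (clamp_id R0 t Htt) in Hs. lra.
Qed.

Lemma quadrant_max F R0 ts rs : 0 <= ts < R0 -> 0 <= rs < R0 ->
  cont_in_space F R0 -> equicont_in_time F R0 ->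
  (forall t r, 0 <= t -> 0 <= r -> (R0 <= t \/ R0 <= r) -> F t r < F ts rs) ->
  exists t1 r1, 0 <= t1 /\ 0 <= r1 /\ forall t r, 0 <= t -> 0 <= r -> F t r <= F t1 r1.
Proof.
  intros Hts Hrs Hr Ht Hout.
  destruct (square_max F R0 ltac:(lra) Hr Ht) as [t1 [r1 [Ht1 [Hr1 Hmax]]]].
  exists t1, r1. split; [lra | split; [lra |]]. intros t r Ht0 Hr0.
  pose proof (Hmax ts rs ltac:(lra) ltac:(lra)) as Hs.
  destruct (Rle_dec R0 t) as [Hfar | Hnear].
  - pose proof (Hout t r Ht0 Hr0 (or_introl Hfar)). lra.
  - destruct (Rle_dec R0 r) as [Hfar | Hnear'].
    + pose proof (Hout t r Ht0 Hr0 (or_intror Hfar)). lra.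
    + apply Hmax; lra.
Qed.

Lemma cont_in_space_plus F G R0 : cont_in_space F R0 -> cont_in_space G R0 ->
  cont_in_space (fun t r => F t r + G t r) R0.
Proof.
  intros HF HG t r Ht Hr eps He.
  destruct (HF t r Ht Hr (eps / 2)) as [d1 [Hd1 H1]]; [lra |].
  destruct (HG t r Ht Hr (eps / 2)) as [d2 [Hd2 H2]]; [lra |].
  exists (Rmin d1 d2). split; [apply Rmin_pos; lra |]. intros r' Hr' Hd.
  specialize (H1 r' Hr' (lt_Rmin_l _ _ _ Hd)). specialize (H2 r' Hr' (lt_Rmin_r _ _ _ Hd)).
  replace (F t r' + G t r' - (F t r + G t r)) with ((F t r' - F t r) + (G t r' - G t r))
    by ring.
  eapply Rle_lt_trans; [apply Rabs_triang | lra].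
Qed.

Lemma equicont_in_time_plus F G R0 : equicont_in_time F R0 -> equicont_in_time G R0 ->
  equicont_in_time (fun t r => F t r + G t r) R0.
Proof.
  intros HF HG eps He.
  destruct (HF (eps / 2)) as [d1 [Hd1 H1]]; [lra |].
  destruct (HG (eps / 2)) as [d2 [Hd2 H2]]; [lra |].
  exists (Rmin d1 d2). split; [apply Rmin_pos; lra |]. intros t t' r Ht Ht' Hr Hd.
  specialize (H1 t t' r Ht Ht' Hr (lt_Rmin_l _ _ _ Hd)).
  specialize (H2 t t' r Ht Ht' Hr (lt_Rmin_r _ _ _ Hd)).
  replace (F t r + G t r - (F t' r + G t' r)) with ((F t r - F t' r) + (G t r - G t' r))
    by ring.
  eapply Rle_lt_trans; [apply Rabs_triang | lra].
Qed.

Lemma cont_in_space_opp F R0 : cont_in_space F R0 -> cont_in_space (fun t r => - F t r) R0.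
Proof.
  intros H t r Ht Hr eps He. destruct (H t r Ht Hr eps He) as [d [Hd H1]].
  exists d; split; [exact Hd |]. intros.
  replace (- F t r' - - F t r) with (- (F t r' - F t r)) by ring. rewrite Rabs_Ropp. auto.
Qed.

Lemma equicont_in_time_opp F R0 :
  equicont_in_time F R0 -> equicont_in_time (fun t r => - F t r) R0.
Proof.
  intros H eps He. destruct (H eps He) as [d [Hd H1]]. exists d; split; [exact Hd |].
  intros. replace (- F t r - - F t' r) with (- (F t r - F t' r)) by ring.
  rewrite Rabs_Ropp. auto.
Qed.

Lemma cont_in_space_of_continuous F R0 :
  (forall t x, continuity_pt (F t) x) -> cont_in_space F R0.
Proof.
  intros H t r Ht Hr eps He. specialize (H t r).
  unfold continuity_pt, continue_in, limit1_in, limit_in in H. simpl in H. unfold R_dist in H.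
  destruct (H eps He) as [d [Hd H1]]. exists d; split; [exact Hd |].
  intros r' _ Hr'. destruct (Req_dec r' r) as [-> | Hne].
  - rewrite Rminus_diag, Rabs_R0. lra.
  - apply H1. split; [split; [exact I | auto] | exact Hr'].
Qed.

Lemma cont_in_space_time_only u R0 : cont_in_space (fun t _ => u t) R0.
Proof.
  intros t r _ _ eps He. exists 1. split; [lra |]. intros. rewrite Rminus_diag, Rabs_R0. lra.
Qed.

Lemma equicont_in_time_time_only u R0 :
  (forall x, continuity_pt u x) -> equicont_in_time (fun t _ => u t) R0.
Proof.
  intros H eps He.
  destruct (Heine u (fun c => 0 <= c <= R0) (compact_P3 0 R0) (fun x _ => H x)
              (mkposreal eps He)) as [d Hd].
  exists d. split; [apply cond_pos |]. intros t t' r Ht Ht' _ Htt. apply (Hd t t' Ht Ht' Htt).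
Qed.

Lemma equicont_in_time_space_only v R0 : equicont_in_time (fun _ r => v r) R0.
Proof.
  intros eps He. exists 1. split; [lra |]. intros. rewrite Rminus_diag, Rabs_R0. lra.
Qed.

Lemma BUC2_cont_in_space m R0 : BUC2 m -> cont_in_space m R0.
Proof.
  intros [_ H] t r Ht Hr eps He. destruct (H eps He) as [d [Hd H1]].
  exists d; split; [exact Hd |]. intros r' Hr' Hrr.
  apply H1; try lra. rewrite Rminus_diag, Rabs_R0; lra.
Qed.

Lemma BUC2_equicont_in_time m R0 : BUC2 m -> equicont_in_time m R0.
Proof.
  intros [_ H] eps He. destruct (H eps He) as [d [Hd H1]]. exists d; split; [exact Hd |].
  intros t t' r Ht Ht' Hr Htt. apply H1; try lra. rewrite Rminus_diag, Rabs_R0; lra.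
Qed.

(* (x_+)^2, a C^1 function used to penalize large times. *)
Definition sq_pos (x : R) : R := if Rle_dec x 0 then 0 else x * x.
Definition sq_pos_deriv (x : R) : R := if Rle_dec x 0 then 0 else 2 * x.

Lemma sq_pos_nonneg x : 0 <= sq_pos x.
Proof. unfold sq_pos; destruct Rle_dec as [| H]; [lra | apply Rnot_le_lt in H; nra]. Qed.

Lemma sq_pos_deriv_nonneg x : 0 <= sq_pos_deriv x.
Proof. unfold sq_pos_deriv; destruct Rle_dec as [| H]; [lra | apply Rnot_le_lt in H; lra]. Qed.

Lemma sq_pos_remainder x y : Rabs (sq_pos y - sq_pos x - sq_pos_deriv x * (y - x)) <= (y - x) ^ 2.
Proof.
  unfold sq_pos, sq_pos_deriv.
  destruct (Rle_dec y 0) as [Hy | Hy]; destruct (Rle_dec x 0) as [Hx | Hx];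
    try apply Rnot_le_lt in Hy; try apply Rnot_le_lt in Hx.
  - replace (0 - 0 - 0 * (y - x)) with 0 by ring. rewrite Rabs_R0.
    pose proof (pow2_ge_0 (y - x)). lra.
  - rewrite Rabs_right; nra.
  - rewrite Rabs_right; nra.
  - replace (y * y - x * x - 2 * x * (y - x)) with ((y - x) ^ 2) by ring.
    pose proof (pow2_ge_0 (y - x)). rewrite Rabs_right; lra.
Qed.

Lemma time_penalty_fderiv ep lam T0 x : 0 <= lam ->
  fderiv1 (fun y => ep * y + lam * sq_pos (y - T0)) x (ep + lam * sq_pos_deriv (x - T0)).
Proof.
  intros Hl. apply (fderiv1_quad _ _ _ lam Hl). intros y.
  replace (ep * y + lam * sq_pos (y - T0) - (ep * x + lam * sq_pos (x - T0))
           - (ep + lam * sq_pos_deriv (x - T0)) * (y - x))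
    with (lam * (sq_pos (y - T0) - sq_pos (x - T0)
                 - sq_pos_deriv (x - T0) * ((y - T0) - (x - T0)))) by ring.
  rewrite Rabs_mult, Rabs_right by lra.
  replace (y - x) with ((y - T0) - (x - T0)) by ring.
  apply Rmult_le_compat_l; [lra | apply sq_pos_remainder].
Qed.

(* The penalization  eps t + lam ((t - T0)_+)^2 + del r^2: it grows at infinity in both
   variables, vanishes up to order eps at small times, and forbids times beyond 2 T0. *)
Definition penalty (ep lam de T0 t r : R) : R := ep * t + lam * sq_pos (t - T0) + de * (r * r).

Lemma penalty_nonneg ep lam de T0 t r : 0 <= ep -> 0 <= lam -> 0 <= de -> 0 <= t ->
  0 <= penalty ep lam de T0 t r.
Proof.
  intros. unfold penalty. pose proof (sq_pos_nonneg (t - T0)).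
  assert (0 <= r * r) by nra. nra.
Qed.

Lemma penalty_fderiv2 ep lam de T0 t r : 0 <= lam ->
  fderiv2 (penalty ep lam de T0) t r (ep + lam * sq_pos_deriv (t - T0)) (de * (2 * r)).
Proof.
  intros Hl.
  apply (fderiv2_ext (fun s q => (ep * s + lam * sq_pos (s - T0)) + de * (q * q)) _ t r
           ((ep + lam * sq_pos_deriv (t - T0)) + 0) (0 + de * (2 * r)));
    [reflexivity | ring | ring |].
  apply fderiv2_plus.
  - apply (fderiv2_time (fun s => ep * s + lam * sq_pos (s - T0))), time_penalty_fderiv, Hl.
  - apply (fderiv2_space (fun q => de * (q * q))), fderiv1_scal, fderiv1_sq.
Qed.

Lemma penalty_cont_in_space ep lam de T0 R0 :
  cont_in_space (fun t r => - penalty ep lam de T0 t r) R0.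
Proof.
  apply cont_in_space_opp. unfold penalty. apply cont_in_space_plus.
  - apply cont_in_space_time_only.
  - apply cont_in_space_of_continuous. intros t x.
    exact (fderiv1_continuous _ _ _ (fderiv1_scal de _ _ _ (fderiv1_sq x))).
Qed.

Lemma penalty_equicont_in_time ep lam de T0 R0 : 0 <= lam ->
  equicont_in_time (fun t r => - penalty ep lam de T0 t r) R0.
Proof.
  intros Hl. apply equicont_in_time_opp. unfold penalty. apply equicont_in_time_plus.
  - apply equicont_in_time_time_only. intros x.
    exact (fderiv1_continuous _ _ _ (time_penalty_fderiv ep lam T0 x Hl)).
  - apply equicont_in_time_space_only.
Qed.

Lemma penalty_large ep lam de T0 K t r : 0 <= ep -> 0 < T0 -> lam * (T0 * T0) = K ->
  0 < de -> 0 < K -> 0 <= t -> 0 <= r -> (2 * T0 <= t \/ 1 + K / de <= r) ->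
  K <= penalty ep lam de T0 t r.
Proof.
  intros Hep HT0 HK Hde HK0 Ht Hr Hfar.
  assert (Hlam : 0 < lam) by (apply (Rmult_lt_reg_r (T0 * T0)); nra).
  pose proof (sq_pos_nonneg (t - T0)). unfold penalty.
  destruct Hfar as [Hfar | Hfar].
  - assert (sq_pos (t - T0) >= T0 * T0) by (unfold sq_pos; destruct Rle_dec; [lra | nra]).
    nra.
  - assert (HKd : 0 < K / de) by (apply Rdiv_lt_0_compat; lra).
    assert (Hdr : K <= de * r).
    { rewrite <- (Rdiv_mul_cancel K de Hde), (Rmult_comm de r).
      apply Rmult_le_compat_r; lra. }
    nra.
Qed.

Lemma penalized_max G B L ts rs T0 :
  (forall R0, cont_in_space G R0) -> (forall R0, equicont_in_time G R0) ->
  (forall t r, 0 <= t -> 0 <= r -> G t r <= B) ->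
  0 <= ts < T0 -> 0 <= rs -> L < G ts rs ->
  exists ep lam de t1 r1, 0 < ep /\ 0 <= lam /\ 0 < de /\ 0 <= t1 < 2 * T0 /\ 0 <= r1 /\
    L < G t1 r1 - penalty ep lam de T0 t1 r1 /\
    forall t r, 0 <= t -> 0 <= r ->
      G t r - penalty ep lam de T0 t r <= G t1 r1 - penalty ep lam de T0 t1 r1.
Proof.
  intros HGs HGt HGB Hts Hrs HL.
  set (th := G ts rs - L).
  assert (Hth : 0 < th) by (unfold th; lra).
  assert (HBL : 0 < B - L + 1) by (pose proof (HGB ts rs ltac:(lra) Hrs); lra).
  set (ep := th / (4 * (ts + 1))).
  set (de := th / (4 * (rs * rs + 1))).
  set (lam := (B - L + 1) / (T0 * T0)).
  assert (Hep : 0 < ep) by (apply Rdiv_lt_0_compat; lra).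
  assert (Hde : 0 < de) by (apply Rdiv_lt_0_compat; nra).
  assert (Hlam : 0 < lam) by (apply Rdiv_lt_0_compat; nra).
  assert (Hlam2 : lam * (T0 * T0) = B - L + 1) by (unfold lam; field; lra).
  set (F := fun t r => G t r + - penalty ep lam de T0 t r).
  assert (Hstar : L + th / 2 < F ts rs).
  { assert (Hz : sq_pos (ts - T0) = 0)
      by (unfold sq_pos; destruct Rle_dec as [| Hn]; [reflexivity | exfalso; apply Hn; lra]).
    assert (ep * (4 * (ts + 1)) = th) by (unfold ep; field; lra).
    assert (de * (4 * (rs * rs + 1)) = th) by (unfold de; field; nra).
    unfold F, penalty. rewrite Hz. unfold th in *. nra. }
  set (R0 := 2 * T0 + rs + 1 + (B - L + 1) / de).
  assert (HBd : 0 < (B - L + 1) / de) by (apply Rdiv_lt_0_compat; lra).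
  assert (Hout : forall t r, 0 <= t -> 0 <= r -> (2 * T0 <= t \/ R0 <= r) -> F t r < L).
  { intros t r Ht Hr Hfar. pose proof (HGB t r Ht Hr).
    pose proof (penalty_large ep lam de T0 (B - L + 1) t r ltac:(lra) ltac:(lra) Hlam2 Hde HBL
                  Ht Hr ltac:(unfold R0 in Hfar; lra)).
    unfold F. lra. }
  assert (HFs : cont_in_space F R0)
    by (apply cont_in_space_plus; [apply HGs | apply penalty_cont_in_space]).
  assert (HFt : equicont_in_time F R0)
    by (apply equicont_in_time_plus; [apply HGt | apply penalty_equicont_in_time; lra]).
  destruct (quadrant_max F R0 ts rs ltac:(unfold R0; lra) ltac:(unfold R0; lra) HFs HFt
              ltac:(intros t r Ht Hr Hfar; pose proof (Hout t r Ht Hr ltac:(unfold R0 in *; lra));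
                    lra))
    as [t1 [r1 [Ht1 [Hr1 Hmax]]]].
  assert (HF1 : L + th / 2 < F t1 r1) by (pose proof (Hmax ts rs ltac:(lra) Hrs); lra).
  exists ep, lam, de, t1, r1. repeat split; try lra.
  - destruct (Rlt_le_dec t1 (2 * T0)) as [| Hfar]; [assumption | exfalso].
    pose proof (Hout t1 r1 Ht1 Hr1 (or_introl Hfar)). lra.
  - unfold F in HF1. lra.
  - intros t r Ht Hr. pose proof (Hmax t r Ht Hr). unfold F in *. lra.
Qed.

(* If m > M somewhere, m - penalty has a maximum over the quadrant
   where m > M >= 0; the data exclude t = 0 and r = 0, and at the interior maximum the
   penalty touches m from above with time derivative >= eps > 0, against the subsolution
   inequality. *)
Lemma subsolution_le_const a m0 m M : 0 <= M ->
  (forall r, 0 <= r -> m0 r <= M) -> BUC2 m -> visc_sub a m0 m ->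
  forall t r, 0 <= t -> 0 <= r -> m t r <= M.
Proof.
  intros HM Hm0 Hbuc [_ [Hsub [Hinit Hbd]]] ts rs Hts Hrs.
  destruct (Rle_dec (m ts rs) M) as [| Hgt]; [assumption | exfalso]. apply Rnot_le_lt in Hgt.
  destruct (proj1 Hbuc) as [B HB].
  assert (HmB : forall t r, 0 <= t -> 0 <= r -> m t r <= B)
    by (intros t r Ht Hr; exact (proj2 (Rabs_le_inv _ _ (HB t r Ht Hr)))).
  set (T0 := ts + 1).
  destruct (penalized_max m B M ts rs T0 (fun R0 => BUC2_cont_in_space m R0 Hbuc)
              (fun R0 => BUC2_equicont_in_time m R0 Hbuc) HmB ltac:(unfold T0; lra) Hrs Hgt)
    as [ep [lam [de [t1 [r1 [Hep [Hlam [Hde [Ht1 [Hr1 [HF1 Hmax]]]]]]]]]]].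
  pose proof (penalty_nonneg ep lam de T0 t1 r1 ltac:(lra) Hlam ltac:(lra) (proj1 Ht1)).
  assert (Ht1p : 0 < t1).
  { destruct (Rle_lt_or_eq_dec 0 t1 (proj1 Ht1)) as [| <-]; [assumption |].
    pose proof (Hinit r1 Hr1). pose proof (Hm0 r1 Hr1). lra. }
  assert (Hr1p : 0 < r1).
  { destruct (Rle_lt_or_eq_dec 0 r1 Hr1) as [| <-]; [assumption |].
    pose proof (Hbd t1 (proj1 Ht1)). lra. }
  assert (Hsd : superdiff m t1 r1 (ep + lam * sq_pos_deriv (t1 - T0)) (de * (2 * r1)))
    by exact (touch_above_superdiff m (penalty ep lam de T0) t1 r1 _ _ Ht1p Hr1p
                (penalty_fderiv2 ep lam de T0 t1 r1 Hlam) Hmax).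
  pose proof (Hsub t1 r1 _ _ Ht1p Hr1p Hsd).
  pose proof (pospow_nonneg (de * (2 * r1)) a). pose proof (sq_pos_deriv_nonneg (t1 - T0)).
  nra.
Qed.

Definition gap_pow (b c0 q : R) : R := if Rlt_dec q c0 then Rpower (c0 - q) b else 0.

Definition gap_pow_deriv (b c0 q : R) : R :=
  if Rlt_dec q c0 then - (b * Rpower (c0 - q) (b - 1)) else 0.

Lemma gap_pow_nonneg b c0 q : 0 <= gap_pow b c0 q.
Proof. unfold gap_pow. destruct Rlt_dec; [left; apply Rpower_pos | lra]. Qed.

Lemma gap_pow_le b c0 q : 0 <= b -> 0 < c0 -> 0 <= q -> gap_pow b c0 q <= Rpower c0 b.
Proof.
  intros Hb Hc Hq. unfold gap_pow. destruct Rlt_dec.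
  - apply Rle_Rpower_l; lra.
  - left; apply Rpower_pos.
Qed.

Lemma gap_pow_zero b c0 q : c0 <= q -> gap_pow b c0 q = 0.
Proof. intros Hq. unfold gap_pow. destruct Rlt_dec; [lra | reflexivity]. Qed.

(* Left of c0 this is the chain rule; at c0 the bound (c0 - y)^b <= eps (c0 - y) for
   c0 - y < eps^(1/(b-1)) shows the derivative vanishes; right of c0, h = 0. *)
Lemma gap_pow_fderiv b c0 q : 1 < b -> fderiv1 (gap_pow b c0) q (gap_pow_deriv b c0 q).
Proof.
  intros Hb. destruct (Rtotal_order q c0) as [Hlt | [Heq | Hgt]].
  - unfold gap_pow_deriv at 1. destruct (Rlt_dec q c0); [| lra].
    apply (fderiv1_local _ (fun y => Rpower (c0 - y) b) _ _ (c0 - q)); [lra | |].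
    + intros y Hy. unfold gap_pow. destruct (Rlt_dec y c0) as [| Hn]; [reflexivity |].
      exfalso; apply Hn; apply Rabs_def2 in Hy. lra.
    + assert (H := derivable_pt_lim_comp (minus_fct (fct_cte c0) id) (fun x => Rpower x b)
                     q (0 - 1) _
                     (derivable_pt_lim_minus _ _ q _ _ (derivable_pt_lim_const c0 q)
                        (derivable_pt_lim_id q))
                     (derivable_pt_lim_power (minus_fct (fct_cte c0) id q) b
                        ltac:(unfold minus_fct, fct_cte, id; lra))).
      apply fderiv1_of_derivable in H. eapply fderiv1_ext; [| | exact H].
      * intros y. reflexivity.
      * unfold minus_fct, fct_cte, id. ring.
  - subst q. unfold gap_pow_deriv. destruct (Rlt_dec c0 c0); [lra |].
    intros eps He. exists (Rpower eps (/ (b - 1))). split; [apply Rpower_pos |].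
    intros y Hy. unfold gap_pow. destruct (Rlt_dec c0 c0); [lra |].
    destruct (Rlt_dec y c0) as [Hy0 | Hy0].
    + rewrite Rabs_left in Hy by lra.
      assert (E : Rpower (c0 - y) b = Rpower (c0 - y) (b - 1) * (c0 - y)).
      { replace b with ((b - 1) + 1) at 1 by ring. rewrite Rpower_plus, Rpower_1; [ring | lra]. }
      assert (Hle : Rpower (c0 - y) (b - 1) <= eps).
      { replace eps with (Rpower (Rpower eps (/ (b - 1))) (b - 1)).
        - apply Rle_Rpower_l; lra.
        - rewrite Rpower_mult. replace (/ (b - 1) * (b - 1)) with 1 by (field; lra).
          apply Rpower_1; exact He. }
      pose proof (Rpower_pos (c0 - y) (b - 1)).
      rewrite E. replace (Rpower (c0 - y) (b - 1) * (c0 - y) - 0 - 0 * (y - c0))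
        with (Rpower (c0 - y) (b - 1) * (c0 - y)) by ring.
      rewrite Rabs_right by nra. rewrite (Rabs_left (y - c0)) by lra. nra.
    + replace (0 - 0 - 0 * (y - c0)) with 0 by ring. rewrite Rabs_R0.
      pose proof (Rabs_pos (y - c0)); nra.
  - unfold gap_pow_deriv at 1. destruct (Rlt_dec q c0); [lra |].
    apply (fderiv1_local _ (fun _ => 0) _ _ (q - c0)); [lra | | apply fderiv1_const].
    intros y Hy. unfold gap_pow. destruct (Rlt_dec y c0); [| reflexivity].
    apply Rabs_def2 in Hy. lra.
Qed.

Definition barrier (M A cc b c0 t r : R) : R := M - A * gap_pow b c0 r * (1 + cc * t).

Lemma barrier_le M A cc b c0 t r : 0 <= A -> 0 <= cc -> 0 <= t -> barrier M A cc b c0 t r <= M.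
Proof.
  intros HA Hcc Ht. unfold barrier. pose proof (gap_pow_nonneg b c0 r).
  assert (0 <= A * gap_pow b c0 r * (1 + cc * t))
    by (apply Rmult_le_pos; [apply Rmult_le_pos |]; nra).
  lra.
Qed.

Lemma barrier_at_origin M A cc b c0 t : 0 <= A -> 0 < c0 -> 0 <= cc * t ->
  M - A * Rpower c0 b <= 0 -> barrier M A cc b c0 t 0 <= 0.
Proof.
  intros HA Hc0 Ht Hwb. unfold barrier.
  assert (Hh0 : gap_pow b c0 0 = Rpower c0 b)
    by (unfold gap_pow; destruct Rlt_dec; [f_equal; ring | lra]).
  rewrite Hh0. pose proof (Rpower_pos c0 b).
  assert (0 <= A * Rpower c0 b * (cc * t)) by (apply Rmult_le_pos; [apply Rmult_le_pos |]; lra).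
  nra.
Qed.

Lemma barrier_fderiv2 M A cc b c0 t r : 1 < b ->
  fderiv2 (barrier M A cc b c0) t r
    (- A * cc * gap_pow b c0 r) (- A * gap_pow_deriv b c0 r * (1 + cc * t)).
Proof.
  intros Hb. pose proof (gap_pow_fderiv b c0 r Hb) as Hh.
  apply (fderiv2_ext
           (fun s q => (M + - A * gap_pow b c0 q) + s * (- A * cc * gap_pow b c0 q)) _ t r
           (0 + - A * cc * gap_pow b c0 r)
           ((0 + - A * gap_pow_deriv b c0 r) + t * (- A * cc * gap_pow_deriv b c0 r)));
    [intros; unfold barrier; ring | ring | ring |].
  apply fderiv2_plus.
  - apply (fderiv2_space (fun q => M + - A * gap_pow b c0 q)).
    apply fderiv1_plus; [apply fderiv1_const | apply fderiv1_scal, Hh].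
  - apply (fderiv2_time_mul (fun q => - A * cc * gap_pow b c0 q)), fderiv1_scal, Hh.
Qed.

Lemma barrier_cont_in_space M A cc b c0 R0 : 1 < b -> cont_in_space (barrier M A cc b c0) R0.
Proof.
  intros Hb. apply cont_in_space_of_continuous. intros t x.
  apply (fderiv1_continuous _ _ (0 + - A * (1 + cc * t) * gap_pow_deriv b c0 x)).
  apply (fderiv1_ext (fun q => M + - A * (1 + cc * t) * gap_pow b c0 q) _ x
           (0 + - A * (1 + cc * t) * gap_pow_deriv b c0 x));
    [intros; unfold barrier; ring | reflexivity |].
  apply fderiv1_plus; [apply fderiv1_const |].
  apply (fderiv1_scal (- A * (1 + cc * t)) (gap_pow b c0)), gap_pow_fderiv, Hb.
Qed.

(* On [0,R0] the barrier is Lipschitz in time with constant A c0^b c. *)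
Lemma barrier_equicont_in_time M A cc b c0 R0 : 0 <= A -> 0 <= cc -> 0 <= b -> 0 < c0 ->
  equicont_in_time (barrier M A cc b c0) R0.
Proof.
  intros HA Hcc Hb Hc0 eps He.
  set (L := A * Rpower c0 b * cc).
  assert (HL : 0 <= L) by (unfold L; pose proof (Rpower_pos c0 b);
                           apply Rmult_le_pos; [apply Rmult_le_pos |]; lra).
  exists (eps / (L + 1)). split; [apply Rdiv_lt_0_compat; lra |].
  intros t t' r _ _ Hr Htt.
  unfold barrier.
  replace (M - A * gap_pow b c0 r * (1 + cc * t) - (M - A * gap_pow b c0 r * (1 + cc * t')))
    with (- (A * gap_pow b c0 r * cc) * (t - t')) by ring.
  rewrite Rabs_mult, Rabs_Ropp.
  pose proof (gap_pow_le b c0 r Hb Hc0 (proj1 Hr)). pose proof (gap_pow_nonneg b c0 r).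
  assert (Hk : 0 <= A * gap_pow b c0 r * cc) by (apply Rmult_le_pos; [apply Rmult_le_pos |]; lra).
  assert (A * gap_pow b c0 r * cc <= L)
    by (unfold L; apply Rmult_le_compat_r; [lra |]; apply Rmult_le_compat_l; lra).
  rewrite (Rabs_right _ (Rle_ge _ _ Hk)).
  pose proof (Rdiv_mul_cancel eps (L + 1) ltac:(lra)). pose proof (Rabs_pos (t - t')).
  nra.
Qed.

(* The key computation: for r < c0, w_t = -A c h and w_r = A b (1 + c t) (c0 - r)^(b-1);
   since (b - 1) a = b, (w_r)^a = (A b (1 + c t))^a h, hence
   w_t + (w_r)_+^a M <= (-A c + (2 A b)^a M) h = 0 when 1 + c t <= 2 and A c = (2 A b)^a M. *)
Lemma barrier_subsolution a b c0 A cc M t q : 0 < a -> 1 < b -> (b - 1) * a = b ->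
  0 < A -> 0 <= M -> A * cc = Rpower (2 * A * b) a * M -> 0 <= cc * t -> 1 + cc * t <= 2 ->
  - A * cc * gap_pow b c0 q + pospow (- A * gap_pow_deriv b c0 q * (1 + cc * t)) a * M <= 0.
Proof.
  intros Ha Hb Hab HA HM Hcc Ht Ht2. unfold gap_pow, gap_pow_deriv.
  destruct (Rlt_dec q c0) as [Hq | Hq].
  - set (s := c0 - q). assert (Hs : 0 < s) by (unfold s; lra).
    set (k := A * b * (1 + cc * t)).
    assert (Hk : 0 < k) by (unfold k; apply Rmult_lt_0_compat; [apply Rmult_lt_0_compat |]; lra).
    pose proof (Rpower_pos s (b - 1)) as Hsb.
    replace (- A * - (b * Rpower s (b - 1)) * (1 + cc * t)) with (k * Rpower s (b - 1))
      by (unfold k; ring).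
    unfold pospow. destruct (Rle_dec (k * Rpower s (b - 1)) 0) as [Hn | _]; [nra |].
    rewrite <- Rpower_mult_distr, Rpower_mult, Hab by assumption.
    assert (HAb : 0 < A * b) by nra.
    assert (Rpower k a <= Rpower (2 * A * b) a)
      by (apply Rle_Rpower_l; [lra | split; [exact Hk | unfold k; nra]]).
    pose proof (Rpower_pos s b).
    replace (- A * cc * Rpower s b) with (- (A * cc) * Rpower s b) by ring. rewrite Hcc.
    assert (Rpower k a * (Rpower s b * M) <= Rpower (2 * A * b) a * (Rpower s b * M))
      by (apply Rmult_le_compat_r; nra).
    lra.
  - unfold pospow. replace (- A * 0 * (1 + cc * t)) with 0 by ring.
    destruct (Rle_dec 0 0); [lra | lra].
Qed.

Lemma barrier_strict_subsolution a b c0 A cc M t q p1 p2 v ep :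
  0 < a -> 1 < b -> (b - 1) * a = b -> 0 < A -> 0 <= M -> A * cc = Rpower (2 * A * b) a * M ->
  0 <= cc * t -> 1 + cc * t <= 2 -> 0 < ep ->
  p1 <= - A * cc * gap_pow b c0 q - ep ->
  p2 <= - A * gap_pow_deriv b c0 q * (1 + cc * t) -> v < M ->
  p1 + pospow p2 a * v < 0.
Proof.
  intros Ha Hb Hab HA HM Hcc Ht Ht2 Hep Hp1 Hp2 Hv.
  pose proof (barrier_subsolution a b c0 A cc M t q Ha Hb Hab HA HM Hcc Ht Ht2).
  set (p := - A * gap_pow_deriv b c0 q * (1 + cc * t)) in *.
  assert (pospow p2 a <= pospow p a) by (apply pospow_mono; lra).
  pose proof (pospow_nonneg p2 a). pose proof (pospow_nonneg p a).
  destruct (Rle_dec 0 v).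
  - assert (pospow p2 a * v <= pospow p a * M) by nra. lra.
  - assert (pospow p2 a * v <= 0) by nra. nra.
Qed.


Lemma barrier_minus_regular M A cc b c0 m R0 : 1 < b -> 0 <= A -> 0 <= cc -> 0 < c0 ->
  BUC2 m -> cont_in_space (fun t r => barrier M A cc b c0 t r + - m t r) R0 /\
            equicont_in_time (fun t r => barrier M A cc b c0 t r + - m t r) R0.
Proof.
  intros Hb HA Hcc Hc0 Hbuc. split.
  - apply cont_in_space_plus;
      [apply barrier_cont_in_space, Hb | apply cont_in_space_opp, BUC2_cont_in_space, Hbuc].
  - apply equicont_in_time_plus;
      [apply barrier_equicont_in_time; lra | apply equicont_in_time_opp, BUC2_equicont_in_time, Hbuc].
Qed.

(* Lower bound: the barrier stays below every BUC viscosity supersolution on [0, 1/(2c)),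
   provided it lies below the initial datum and is nonpositive at r = 0.  If w > m somewhere,
   (w - m) - penalty (with T0 = 1/(2c)) has a maximum over the quadrant at some t1 < 1/c, so
   that 1 + c t1 <= 2; the data exclude t = 0 and r = 0, and at the interior point
   w - penalty touches m from below, against barrier_strict_subsolution since m < w <= M. *)
Lemma barrier_le_supersolution a b m0 m M c0 A cc :
  0 < a -> 1 < b -> (b - 1) * a = b -> 0 < M -> 0 < c0 -> 0 < A ->
  A * cc = Rpower (2 * A * b) a * M -> BUC2 m -> visc_super a m0 m ->
  (forall q, 0 <= q -> M - A * gap_pow b c0 q <= m0 q) -> M - A * Rpower c0 b <= 0 ->
  forall t r, 0 <= t -> t < / (2 * cc) -> 0 <= r -> barrier M A cc b c0 t r <= m t r.
Proof.
  intros Ha Hb Hab HM Hc0 HA Hcc Hbuc [_ [Hsup [Hinit Hbd]]] Hw0 Hwb ts rs Hts HtT Hrs.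
  assert (Hcc0 : 0 < cc).
  { apply (Rmult_lt_reg_l A); [lra |]. rewrite Hcc, Rmult_0_r.
    apply Rmult_lt_0_compat; [apply Rpower_pos | lra]. }
  set (T0 := / (2 * cc)) in *.
  assert (HT0c : cc * (2 * T0) = 1) by (unfold T0; field; lra).
  set (w := barrier M A cc b c0).
  destruct (Rle_dec (w ts rs) (m ts rs)) as [| Hgt]; [assumption | exfalso].
  apply Rnot_le_lt in Hgt.
  destruct (proj1 Hbuc) as [B HB].
  set (G := fun t r => w t r + - m t r).
  assert (Hwle : forall t r, 0 <= t -> w t r <= M) by (intros; apply barrier_le; lra).
  assert (HGB : forall t r, 0 <= t -> 0 <= r -> G t r <= M + B).
  { intros t r Ht Hr. pose proof (Hwle t r Ht). pose proof (Rabs_le_inv _ _ (HB t r Ht Hr)).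
    unfold G. lra. }
  pose proof (fun R0 => barrier_minus_regular M A cc b c0 m R0 Hb ltac:(lra) ltac:(lra) Hc0 Hbuc)
    as Hreg.
  destruct (penalized_max G (M + B) 0 ts rs T0 (fun R0 => proj1 (Hreg R0))
              (fun R0 => proj2 (Hreg R0)) HGB ltac:(lra) Hrs ltac:(unfold G; lra))
    as [ep [lam [de [t1 [r1 [Hep [Hlam [Hde [Ht1 [Hr1 [HF1 Hmax]]]]]]]]]]].
  pose proof (penalty_nonneg ep lam de T0 t1 r1 ltac:(lra) Hlam ltac:(lra) (proj1 Ht1)).
  assert (Ht1p : 0 < t1).
  { destruct (Rle_lt_or_eq_dec 0 t1 (proj1 Ht1)) as [| <-]; [assumption |].
    pose proof (Hinit r1 Hr1). pose proof (Hw0 r1 Hr1).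
    unfold G, w, barrier in HF1. lra. }
  assert (Hr1p : 0 < r1).
  { destruct (Rle_lt_or_eq_dec 0 r1 Hr1) as [| <-]; [assumption |].
    pose proof (Hbd t1 (proj1 Ht1)).
    pose proof (barrier_at_origin M A cc b c0 t1 ltac:(lra) Hc0 ltac:(nra) Hwb).
    unfold G, w in HF1. lra. }
  set (p1 := - A * cc * gap_pow b c0 r1 + - (ep + lam * sq_pos_deriv (t1 - T0))).
  set (p2 := - A * gap_pow_deriv b c0 r1 * (1 + cc * t1) + - (de * (2 * r1))).
  assert (Hsd : subdiff m t1 r1 p1 p2).
  { apply (touch_below_subdiff m (fun s q => w s q + - penalty ep lam de T0 s q));
      [exact Ht1p | exact Hr1p | |].
    - apply fderiv2_plus; [apply barrier_fderiv2, Hb |].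
      apply fderiv2_opp, penalty_fderiv2, Hlam.
    - intros s q Hs Hq. pose proof (Hmax s q Hs Hq). unfold G in *. lra. }
  pose proof (Hsup t1 r1 _ _ Ht1p Hr1p Hsd).
  assert (Hm1 : m t1 r1 < M) by (pose proof (Hwle t1 r1 (proj1 Ht1)); unfold G in HF1; lra).
  pose proof (sq_pos_deriv_nonneg (t1 - T0)).
  assert (Hct : 0 <= cc * t1) by nra.
  assert (Hct2 : 1 + cc * t1 <= 2) by nra.
  assert (Hp1 : p1 <= - A * cc * gap_pow b c0 r1 - ep) by (unfold p1; nra).
  assert (Hp2 : p2 <= - A * gap_pow_deriv b c0 r1 * (1 + cc * t1)) by (unfold p2; nra).
  pose proof (barrier_strict_subsolution a b c0 A cc M t1 r1 p1 p2 (m t1 r1) ep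
                Ha Hb Hab HA ltac:(lra) Hcc Hct Hct2 Hep Hp1 Hp2 Hm1).
  lra.
Qed.

Lemma conjugate_exponent a : 1 < a -> 1 < a / (a - 1) /\ (a / (a - 1) - 1) * a = a / (a - 1).
Proof.
  intros Ha. split.
  - apply (Rmult_lt_reg_r (a - 1)); [lra |]. field_simplify; lra.
  - field. lra.
Qed.

(* The growth condition at c0 puts the datum above a barrier profile: some A > 0 satisfies
   M - A h <= m0 on [0,oo) and M <= A c0^b.  Within del of c0 this is the hypothesis for
   A >= K; farther from c0, h >= d0^b with d0 = min del c0 and m0 >= 0 suffice once
   A d0^b >= M. *)
Lemma datum_above_barrier m0 M c0 b K del : 0 < b -> 0 < M -> 0 < c0 -> 0 < del ->
  (forall x y, 0 <= x -> x <= y -> m0 x <= m0 y) -> m0 0 = 0 ->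
  (forall r, c0 <= r -> m0 r = M) ->
  (forall r, c0 - del < r -> r < c0 -> (M - m0 r) / Rpower (c0 - r) b <= K) ->
  exists A, 0 < A /\ (forall q, 0 <= q -> M - A * gap_pow b c0 q <= m0 q) /\
    M - A * Rpower c0 b <= 0.
Proof.
  intros Hb HM Hc0 Hdel Hmono Hm00 Heq HK.
  set (d0 := Rmin del c0).
  assert (Hd0 : 0 < d0) by (apply Rmin_pos; lra).
  pose proof (Rpower_pos d0 b) as Hpd0.
  set (A := Rmax K (M / Rpower d0 b)).
  assert (HA1 : M / Rpower d0 b <= A) by apply Rmax_r.
  assert (HAK : K <= A) by apply Rmax_l.
  assert (HMd : 0 < M / Rpower d0 b) by (apply Rdiv_lt_0_compat; lra).
  assert (HAd : M <= A * Rpower d0 b).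
  { rewrite <- (Rdiv_mul_cancel M (Rpower d0 b) Hpd0). apply Rmult_le_compat_r; lra. }
  exists A. split; [lra | split].
  - intros q Hq. unfold gap_pow. destruct (Rlt_dec q c0) as [Hqc | Hqc].
    + pose proof (Rpower_pos (c0 - q) b) as Hpq.
      destruct (Rlt_dec (c0 - del) q) as [Hnear | Hfar].
      * specialize (HK q Hnear Hqc).
        assert (M - m0 q <= K * Rpower (c0 - q) b).
        { rewrite <- (Rdiv_mul_cancel (M - m0 q) (Rpower (c0 - q) b) Hpq).
          apply Rmult_le_compat_r; lra. }
        nra.
      * assert (d0 <= c0 - q) by (unfold d0; pose proof (Rmin_l del c0); lra).
        assert (Rpower d0 b <= Rpower (c0 - q) b) by (apply Rle_Rpower_l; lra).
        pose proof (Hmono 0 q (Rle_refl 0) Hq). nra.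
    + rewrite Heq by lra. lra.
  - assert (d0 <= c0) by apply Rmin_r.
    assert (Rpower d0 b <= Rpower c0 b) by (apply Rle_Rpower_l; lra). nra.
Qed.

Theorem mainTheorem8 (a : R) (m0 : R -> R) (M c0 : R) :
  1 < a ->
  BUC1 m0 ->
  (forall x y, 0 <= x -> x <= y -> m0 x <= m0 y) ->
  m0 0 = 0 ->
  is_lub (fun y => exists r, 0 <= r /\ y = m0 r) M ->
  0 < M ->
  0 < c0 ->
  (forall r, 0 <= r -> r < c0 -> m0 r < M) ->
  (forall r, c0 <= r -> m0 r = M) ->
  (exists K del, 0 < del /\ forall r, c0 - del < r -> r < c0 ->
      (M - m0 r) / Rpower (c0 - r) (a / (a - 1)) <= K) ->
  exists T, 0 < T /\
    forall m, BUC2 m -> visc_sol a m0 m ->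
      forall t r, 0 <= t -> t < T -> c0 <= r -> m t r = M.
Proof.
  intros Ha _ Hmono Hm00 Hlub HM Hc0 _ Heq [K [del [Hdel HK]]].
  set (b := a / (a - 1)) in *.
  destruct (conjugate_exponent a Ha) as [Hb Hab]. fold b in Hb, Hab.
  destruct (datum_above_barrier m0 M c0 b K del ltac:(lra) HM Hc0 Hdel Hmono Hm00 Heq HK)
    as [A [HA [Hw0 Hwb]]].
  set (cc := Rpower (2 * A * b) a * M / A).
  assert (Hcc : A * cc = Rpower (2 * A * b) a * M) by (unfold cc; field; lra).
  assert (Hcc0 : 0 < cc)
    by (unfold cc; apply Rdiv_lt_0_compat; [apply Rmult_lt_0_compat; [apply Rpower_pos |] |]; lra).
  exists (/ (2 * cc)). split; [apply Rinv_0_lt_compat; lra |].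
  intros m Hm [Hsub Hsup] t r Ht HtT Hr.
  apply Rle_antisym.
  - apply (subsolution_le_const a m0 m M); [lra | | exact Hm | exact Hsub | exact Ht | lra].
    intros q Hq. apply (proj1 Hlub). exists q. auto.
  - pose proof (barrier_le_supersolution a b m0 m M c0 A cc ltac:(lra) Hb Hab HM Hc0 HA Hcc
                  Hm Hsup Hw0 Hwb t r Ht HtT ltac:(lra)) as Hlow.
    unfold barrier in Hlow. rewrite gap_pow_zero in Hlow by lra. lra.
Qed.
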